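(* Let $\Phi(\mathbf{x})=\sum_{v\in V}\mathbf{x}_v^2$. For every $\mathbf{x}\in\Delta_n$ we have $\Phi(g(\mathbf{x}))\ge\Phi(\mathbf{x})$, with equality only if $\mathbf{x}$ is a fixed point of $g$. Consequently, for every starting point $\mathbf{x}^{(0)}\in\Delta_n$, every limit point of the trajectory $\mathbf{x}^{(t)}=g^t(\mathbf{x}^{(0)})$ is a fixed point of $g$.
   Context: $G=(V,E)$ is a finite undirected graph with $n$ vertices, $N_u$ the neighbourhood of $u$, $\Delta_n=\{\mathbf{x}\in\mathbb{R}^n_{\ge 0}:\sum_v\mathbf{x}_v=1\}$. For every edge $uv\in E$, $F_{uv}=F_{vu}:[-1,1]\to[-1,1]$ is continuously differentiable, $F_{uv}(0)=0$, increasing and odd. The map $g:\Delta_n\to\Delta_n$ is $g(\mathbf{x})_u=\mathbf{x}_u+\sum_{v\in N_u}\mathbf{x}_u\mathbf{x}_vF_{uv}(\mathbf{x}_u-\mathbf{x}_v)$; a fixed point is $\mathbf{p}$ with $g(\mathbf{p})=\mathbf{p}$. *)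

From HB Require Import structures.
From mathcomp Require Import all_boot all_order all_algebra.
From mathcomp Require Import all_classical all_reals all_analysis.
Set Implicit Arguments. Unset Strict Implicit. Unset Printing Implicit Defensive.
Import Order.TTheory GRing.Theory Num.Theory.
Import numFieldNormedType.Exports.
Local Open Scope classical_set_scope.
Local Open Scope ring_scope.

(* Points of R^n are row vectors 'rV[R]_n (product topology = norm topology). *)

Definition simple_graph (n : nat) (e : rel 'I_n) : Prop :=
  symmetric e /\ irreflexive e.

Definition simplex (R : realType) (n : nat) : set 'rV[R]_n :=
  [set x | (forall v, 0 <= x 0 v) /\ \sum_(v < n) x 0 v = 1].

(* Hypotheses on a single edge function F_{uv} : [-1,1] -> [-1,1]
   (F is given on all of R; only its values on [-1,1] matter). *)
Definition admissible_F (R : realType) (f : R -> R) : Prop :=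
  (forall t, t \in `[-1, 1] -> f t \in `[-1, 1]) /\
  (forall t, t \in `[-1, 1] -> derivable f t 1) /\
  {within `[-1, 1], continuous (derive1 f)} /\
  f 0 = 0 /\
  {in `[-1, 1] &, forall s t, s < t -> f s < f t} /\
  (forall t, t \in `[-1, 1] -> f (- t) = - f t).

Definition gmap (R : realType) (n : nat) (e : rel 'I_n)
    (F : 'I_n -> 'I_n -> R -> R) (x : 'rV[R]_n) : 'rV[R]_n :=
  \row_u (x 0 u + \sum_(v < n | e u v) x 0 u * x 0 v * F u v (x 0 u - x 0 v)).

Definition Phi (R : realType) (n : nat) (x : 'rV[R]_n) : R :=
  \sum_(v < n) x 0 v ^+ 2.

(* Write h = g(x) - x.  Pairing the two orientations of each edge, oddness
   of F and F_uv = F_vu give sum_u h_u = 0, and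
   sum_u x_u h_u = sum_{uv in E} x_u x_v (x_u - x_v) F_uv(x_u - x_v) >= 0
   because F is increasing with F(0) = 0; moreover |F| <= 1 gives
   h_u >= - x_u (1 - x_u), so g maps the simplex into itself.  Hence
   Phi(g x) = Phi x + 2 sum_u x_u h_u + |h|^2 >= Phi x + |h|^2, and equality
   forces h = 0.  Along an orbit Phi is nondecreasing and bounded by 1, so its
   increments, and with them |h|^2, tend to 0; by continuity |h|^2 vanishes at
   every cluster point, which lies in the closed simplex. *)

From HB Require Import structures.
From mathcomp Require Import all_boot all_order all_algebra.
From mathcomp Require Import all_classical all_reals all_analysis.
From mathcomp Require Import ring lra.
Import Order.TTheory GRing.Theory Num.Theory.
Import numFieldNormedType.Exports.
Local Open Scope classical_set_scope.
Local Open Scope ring_scope.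
Set Implicit Arguments.

Lemma double_sum_sym (V : nmodType) (I : finType) (c : I -> I -> V) :
  (\sum_i \sum_j c i j) *+ 2 = \sum_i \sum_j (c i j + c j i).
Proof.
under [RHS]eq_bigr do rewrite big_split.
by rewrite big_split /= [X in _ + X]exchange_big.
Qed.

Lemma double_sum_eq0 (R : numDomainType) (I : finType) (c : I -> I -> R) :
  (forall i j, c i j + c j i = 0) -> \sum_i \sum_j c i j = 0.
Proof.
move=> c0; have /eqP := @double_sum_sym R I c.
rewrite [X in _ == X]big1 => [|i _]; last exact: big1.
by rewrite mulrn_eq0 /= => /eqP.
Qed.

Lemma double_sum_ge0 (R : numDomainType) (I : finType) (c : I -> I -> R) :
  (forall i j, 0 <= c i j + c j i) -> 0 <= \sum_i \sum_j c i j.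
Proof.
move=> c0; rewrite -(pmulrn_lge0 _ (isT : (0 < 2)%N)) double_sum_sym.
by apply: sumr_ge0 => i _; apply: sumr_ge0.
Qed.

Lemma cluster_sub_closed (T : topologicalType) (F : set_system T) (A : set T) :
  closed A -> F A -> cluster F `<=` A.
Proof. by move=> Acl FA p; rewrite clusterE => /(_ A FA); apply: Acl. Qed.

(* The increments of [Phi] along [u] tend to [0], so [D u_t] is eventually
   small while [D] stays large near [p]; these two sets cannot both be met. *)
Lemma cluster_increment_le0 (T : topologicalType) (R : realType)
    (Phi D : T -> R) (u : nat -> T) (p : T) :
  (forall t, Phi (u t) + D (u t) <= Phi (u t.+1)) -> cvgn (Phi \o u) ->
  {for p, continuous D} -> cluster (u @ \oo) p -> D p <= 0.
Proof.
move=> inc cvgPhi Dc clp; rewrite leNgt; apply/negP => Dp.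
have step0 : (fun t => Phi (u t.+1) - Phi (u t)) @ \oo --> 0.
  rewrite -(subrr (limn (Phi \o u))).
  by apply: cvgB; [rewrite (cvg_shiftS (Phi \o u)) |]; exact: cvgP cvgPhi.
have small : \forall t \near \oo, D (u t) < D p / 2.
  near=> t; apply: (@le_lt_trans _ _ (Phi (u t.+1) - Phi (u t))).
    by have := inc t; lra.
  by near: t; apply: (cvgr_lt _ step0); lra.
have large : \forall y \near p, D p / 2 < D y by apply: (cvgr_gt _ Dc); lra.
have [y [/= ys yl]] := clp [set y | D y < D p / 2] _ small large.
lra.
Unshelve. all: by end_near.
Qed.

Section SimplexFacts.
Variables (R : realType) (n : nat).

Lemma simplex_coord_ge0 (x : 'rV[R]_n) v : simplex x -> 0 <= x 0 v.
Proof. by case=> + _; apply. Qed.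

Lemma simplex_coord_le1 (x : 'rV[R]_n) v : simplex x -> x 0 v <= 1.
Proof.
move=> [x0 <-]; rewrite (bigD1 v) //= lerDl.
by apply: sumr_ge0 => i _.
Qed.

Lemma simplex_coordB_itv (x : 'rV[R]_n) u v :
  simplex x -> x 0 u - x 0 v \in `[-1, 1].
Proof.
move=> sx; have := simplex_coord_ge0 u sx; have := simplex_coord_le1 u sx.
have := simplex_coord_ge0 v sx; have := simplex_coord_le1 v sx.
by rewrite in_itv /=; move=> *; apply/andP; split; lra.
Qed.

Lemma Phi_simplex_le1 (x : 'rV[R]_n) : simplex x -> Phi x <= 1.
Proof.
move=> sx; have [_ s1] := sx; rewrite /Phi -s1; apply: ler_sum => v _.
have := simplex_coord_ge0 v sx; have := simplex_coord_le1 v sx; nra.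
Qed.

Lemma closed_simplex : closed (@simplex R n).
Proof.
have coordc v : continuous (fun x : 'rV[R]_n => x 0 v).
  by move=> x; exact: (@coord_continuous R 1 n 0 v x).
have sumc : continuous (fun x : 'rV[R]_n => \sum_v x 0 v).
  move=> x; apply: cvg_big; [exact: add_continuous | exact: nbhs_filter |].
  by move=> v _; exact: coordc.
suff : closed (\bigcap_(v in setT) [set x : 'rV[R]_n | 0 <= x 0 v] `&`
               [set x | \sum_v x 0 v = 1]).
  congr closed; apply/seteqP; split=> x /= [x0 s1]; split=> //.
  - by move=> v; apply: x0.
  - by move=> v _; apply: x0.
apply: closedI; first apply: closed_bigI => v _.
  exact: (@preimage_closed _ R _ [set y | 0 <= y] (fun x _ => coordc v x)
            (@closed_ge R 0)).
exact: (@preimage_closed _ R _ [set y | y = 1] (fun x _ => sumc x)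
          (@closed_eq R 1)).
Qed.

End SimplexFacts.

Section AdmissibleFacts.
Variables (R : realType) (f : R -> R).
Hypothesis fA : admissible_F f.

Lemma admissible_F_itv {t : R} : t \in `[-1, 1] -> -1 <= f t <= 1.
Proof. by case: fA => fr _ /fr; rewrite in_itv. Qed.

Lemma admissible_F_odd {t : R} : t \in `[-1, 1] -> f (- t) = - f t.
Proof. by case: fA => [_ [_ [_ [_ [_ fo]]]]]; apply: fo. Qed.

Lemma admissible_F_mul_ge0 {t : R} : t \in `[-1, 1] -> 0 <= t * f t.
Proof.
case: fA => [_ [_ [_ [f0 [fm _]]]]] ti.
have zi : (0 : R) \in `[-1, 1] by rewrite in_itv /= lerN10 ler01.
case: (ltgtP t 0) => [tn|tp|->]; last by rewrite mul0r.
- by have := fm t 0 ti zi tn; rewrite f0 => h; nra.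
- by have := fm 0 t zi ti tp; rewrite f0 => h; nra.
Qed.

Lemma admissible_F_continuous {t : R} :
  t \in `[-1, 1] -> {for t, continuous f}.
Proof.
case: fA => [_ [df _]] /df dft.
by apply/differentiable_continuous; rewrite -derivable1_diffP.
Qed.

End AdmissibleFacts.

Section Dynamics.
Context {R : realType} {n : nat} (e : rel 'I_n) (F : 'I_n -> 'I_n -> R -> R).

Definition gincr (x : 'rV[R]_n) (u : 'I_n) : R :=
  \sum_(v < n | e u v) x 0 u * x 0 v * F u v (x 0 u - x 0 v).

Definition gincr_sq (x : 'rV[R]_n) : R := \sum_u gincr x u ^+ 2.

Lemma gmapE x u : gmap e F x 0 u = x 0 u + gincr x u.
Proof. by rewrite mxE. Qed.

Lemma Phi_gmap x :
  Phi (gmap e F x) = Phi x + 2 * (\sum_u x 0 u * gincr x u) + gincr_sq x.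
Proof.
rewrite /Phi /gincr_sq mulr_sumr -!big_split /=.
by apply: eq_bigr => u _; rewrite gmapE; ring.
Qed.

Lemma gincr_sq_ge0 x : 0 <= gincr_sq x.
Proof. by apply: sumr_ge0 => u _; exact: sqr_ge0. Qed.

Lemma gincr_sq_eq0_fixed x : gincr_sq x = 0 -> gmap e F x = x.
Proof.
move=> /eqP; rewrite psumr_eq0 => [/allP h|u _]; last exact: sqr_ge0.
apply/rowP => u; rewrite gmapE.
move: (h u (mem_index_enum u)).
by rewrite /= sqrf_eq0 => /eqP ->; rewrite addr0.
Qed.

Hypothesis He : simple_graph e.
Hypothesis HF : forall u v, e u v -> F u v = F v u.
Hypothesis HA : forall u v, e u v -> admissible_F (F u v).

Lemma gincr_continuous p u : simplex p -> {for p, continuous (gincr ^~ u)}.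
Proof.
move=> sp; apply: cvg_big; [exact: add_continuous | exact: nbhs_filter |].
move=> v euv.
have cu : (fun y : 'rV[R]_n => y 0 u) @ p --> p 0 u.
  exact: (@coord_continuous R 1 n 0 u p).
have cv : (fun y : 'rV[R]_n => y 0 v) @ p --> p 0 v.
  exact: (@coord_continuous R 1 n 0 v p).
have Fc := admissible_F_continuous (HA euv) (simplex_coordB_itv u v sp).
exact: cvgM (cvgM cu cv) (continuous_cvg _ Fc (cvgB cu cv)).
Qed.

Lemma gincr_sq_continuous p : simplex p -> {for p, continuous gincr_sq}.
Proof.
move=> sp; apply: cvg_big; [exact: add_continuous | exact: nbhs_filter |].
move=> u _; have gc := gincr_continuous (u := u) sp.
rewrite (_ : (fun x => gincr x u ^+ 2) = fun x => gincr x u * gincr x u).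
  exact: (cvgM gc gc).
by apply/funext => x; rewrite expr2.
Qed.

Lemma edge_flow_antisym x u v : simplex x -> e u v ->
  x 0 u * x 0 v * F u v (x 0 u - x 0 v)
  + x 0 v * x 0 u * F v u (x 0 v - x 0 u) = 0.
Proof.
move=> sx euv; rewrite -(HF euv) -[x 0 v - x 0 u]opprB.
rewrite (admissible_F_odd (HA euv) (simplex_coordB_itv u v sx)); ring.
Qed.

Lemma edge_flow_weighted_ge0 x u v : simplex x -> e u v ->
  0 <= x 0 u * (x 0 u * x 0 v * F u v (x 0 u - x 0 v))
       + x 0 v * (x 0 v * x 0 u * F v u (x 0 v - x 0 u)).
Proof.
move=> sx euv; have uvI := simplex_coordB_itv u v sx.
rewrite -(HF euv) -[x 0 v - x 0 u]opprB (admissible_F_odd (HA euv) uvI).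
have -> : x 0 u * (x 0 u * x 0 v * F u v (x 0 u - x 0 v))
    + x 0 v * (x 0 v * x 0 u * - F u v (x 0 u - x 0 v))
    = (x 0 u * x 0 v) * ((x 0 u - x 0 v) * F u v (x 0 u - x 0 v)) by ring.
apply: mulr_ge0; last exact: (admissible_F_mul_ge0 (HA euv) uvI).
by apply: mulr_ge0; apply: simplex_coord_ge0 sx.
Qed.

Let e_sym u v : e u v = e v u.
Proof. by case: He => + _; apply. Qed.

Lemma sum_gincr x : simplex x -> \sum_u gincr x u = 0.
Proof.
move=> sx; under eq_bigr do rewrite /gincr big_mkcond /=.
apply: double_sum_eq0 => u v; rewrite [e v u]e_sym.
case: (boolP (e u v)) => [euv|_]; last by rewrite addr0.
exact: (edge_flow_antisym sx euv).
Qed.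

Lemma sum_mul_gincr_ge0 x : simplex x -> 0 <= \sum_u x 0 u * gincr x u.
Proof.
move=> sx; under eq_bigr do rewrite /gincr mulr_sumr big_mkcond /=.
apply: double_sum_ge0 => u v; rewrite [e v u]e_sym.
case: (boolP (e u v)) => [euv|_]; last by rewrite addr0.
exact: (edge_flow_weighted_ge0 sx euv).
Qed.

Lemma sum_neighbours_le (x : 'rV[R]_n) u :
  simplex x -> \sum_(v | e u v) x 0 v <= 1 - x 0 u.
Proof.
move=> [x0 <-]; rewrite [X in _ <= X - _](bigD1 u) //= addrAC subrr add0r.
rewrite [X in _ <= X](bigID (e u)) /=.
have [_ e_irr] := He.
rewrite (eq_bigl (e u)) => [|v]; last by case: eqVneq => // ->; rewrite e_irr.
by rewrite lerDl; apply: sumr_ge0.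
Qed.

Lemma gincr_ge x u : simplex x -> - (x 0 u * (1 - x 0 u)) <= gincr x u.
Proof.
move=> sx; have xu0 := simplex_coord_ge0 u sx.
apply: le_trans (_ : - (x 0 u * \sum_(v | e u v) x 0 v) <= _).
  by rewrite lerN2 ler_wpM2l // sum_neighbours_le.
rewrite mulr_sumr -sumrN; apply: ler_sum => v euv.
have /andP[Fge _] := admissible_F_itv (HA euv) (simplex_coordB_itv u v sx).
have : 0 <= x 0 u * x 0 v by rewrite mulr_ge0 // simplex_coord_ge0.
nra.
Qed.

Lemma simplex_gmap x : simplex x -> simplex (gmap e F x).
Proof.
move=> sx; split=> [u|].
- rewrite gmapE; have := gincr_ge u sx; have := simplex_coord_ge0 u sx; nra.
- under eq_bigr do rewrite gmapE.
  by rewrite big_split /= sum_gincr // addr0; case: sx.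
Qed.

Lemma Phi_gmap_ge x : simplex x -> Phi x + gincr_sq x <= Phi (gmap e F x).
Proof.
move=> sx; rewrite Phi_gmap; have := sum_mul_gincr_ge0 sx; lra.
Qed.

Lemma cluster_orbit_fixed x0 : simplex x0 -> forall p,
  cluster ((fun t => iter t (gmap e F) x0) @ \oo) p -> gmap e F p = p.
Proof.
set u := fun t => iter t (gmap e F) x0 => sx0 p clp.
have su t : simplex (u t) by elim: t => //= t; exact: simplex_gmap.
have sp : simplex p.
  apply: (cluster_sub_closed (@closed_simplex R n) _ clp).
  exact: (filterE _ su).
have inc t : Phi (u t) + gincr_sq (u t) <= Phi (u t.+1) by exact: Phi_gmap_ge.
have cvgPhi : cvgn (fun t => Phi (u t)).
  apply: nondecreasing_is_cvgn.
    apply/nondecreasing_seqP => t /=.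
    by have := inc t; have := gincr_sq_ge0 (u t); lra.
  by exists 1 => _ [t _ <-]; exact: Phi_simplex_le1.
apply: gincr_sq_eq0_fixed; apply/eqP; rewrite eq_le gincr_sq_ge0 andbT.
exact: (cluster_increment_le0 inc cvgPhi (gincr_sq_continuous sp) clp).
Qed.

End Dynamics.

Theorem mainTheorem3 (R : realType) (n : nat) (e : rel 'I_n)
  (F : 'I_n -> 'I_n -> R -> R) :
  simple_graph e ->
  (forall u v, e u v -> F u v = F v u) ->
  (forall u v, e u v -> admissible_F (F u v)) ->
  (forall x, @simplex R n x ->
     Phi (gmap e F x) >= Phi x /\
     (Phi (gmap e F x) = Phi x -> gmap e F x = x)) /\
  (forall x0, @simplex R n x0 ->
     forall p : 'rV[R]_n,
       cluster ((fun t : nat => iter t (gmap e F) x0) @ \oo) p ->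
       gmap e F p = p).
Proof.
move=> He HF HA; split; last exact: (cluster_orbit_fixed _ He HF HA).
move=> x sx; have Phi_ge := Phi_gmap_ge _ He HF HA sx.
have sq_ge0 := gincr_sq_ge0 e F x.
split=> [|Phi_eq]; first lra.
by apply: gincr_sq_eq0_fixed; apply/eqP; rewrite eq_le sq_ge0 andbT; lra.
Qed.
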